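(* Let $S=(G,P,\Lambda,I)$ be a completely simple semigroup whose sandwich matrix $P$ is singular (i.e. $P$ has two equal rows or two equal columns). Then $S$ is not an equational domain in the language $\mathcal{L}_S$.
   Context: Rees representation: a completely simple (c.s.) semigroup $S=(G,P,\Lambda,I)$ is given by a group $G$, index sets $\Lambda,I$ (each containing an element $1$), and a matrix $P=(p_{i\lambda})_{i\in I,\lambda\in\Lambda}$ over $G$ normalised so that $p_{1\lambda}=p_{i1}=1_G$; elements are triples $(\lambda,g,i)$ with product $(\lambda,g,i)(\mu,h,j)=(\lambda,gp_{i\mu}h,j)$ and inversion $(\lambda,g,i)^{-1}=(\lambda,p_{i\lambda}^{-1}g^{-1}p_{i\lambda}^{-1},i)$. $P$ is non-singular if it has no two equal rows and no two equal columns. The language $\mathcal{L}_S$ is $\{\cdot,{}^{-1}\}$ together with a constant for each element of $S$; terms are built from variables and constants using products and ${}^{-1}$. An equation is an equality $t(X)=s(X)$ of two terms; a system is any set of equations; its solution set in $S^n$ is the set of points satisfying all of them; a subset of $S^n$ is algebraic if it is the solution set of some system. $S$ is an equational domain (e.d.) in $\mathcal{L}_S$ if every finite union of algebraic sets (in $S^n$, any $n$) is algebraic. *)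

From mathcomp Require Import all_boot.
Set Implicit Arguments. Unset Strict Implicit. Unset Printing Implicit Defensive.

Record group := Group {
  gcar :> Type;
  gmul : gcar -> gcar -> gcar;
  ginv : gcar -> gcar;
  gone : gcar;
  gmulA : forall x y z, gmul x (gmul y z) = gmul (gmul x y) z;
  gmul1 : forall x, gmul gone x = x;
  gmulr1 : forall x, gmul x gone = x;
  gmulV : forall x, gmul (ginv x) x = gone;
  gmulVr : forall x, gmul x (ginv x) = gone
}.

Definition normalised (G : group) (L I : Type) (l1 : L) (i1 : I)
  (P : I -> L -> G) : Prop :=
  (forall l, P i1 l = gone G) /\ (forall i, P i l1 = gone G).

Definition singular (G : group) (L I : Type) (P : I -> L -> G) : Prop :=
  (exists i j : I, i <> j /\ forall l, P i l = P j l) \/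
  (exists l m : L, l <> m /\ forall i, P i l = P i m).

Definition cs_elt (G : group) (L I : Type) : Type := (L * G * I)%type.

Definition cs_mul (G : group) (L I : Type) (P : I -> L -> G)
  (x y : cs_elt G L I) : cs_elt G L I :=
  let: (l, g, i) := x in let: (m, h, j) := y in
  (l, gmul (gmul g (P i m)) h, j).

Definition cs_inv (G : group) (L I : Type) (P : I -> L -> G)
  (x : cs_elt G L I) : cs_elt G L I :=
  let: (l, g, i) := x in
  (l, gmul (gmul (ginv (P i l)) (ginv g)) (ginv (P i l)), i).

Inductive term (T : Type) (n : nat) : Type :=
| tvar of 'I_n
| tconst of T
| tmul of term T n & term T n
| tinv of term T n.

Fixpoint teval (T : Type) (mul : T -> T -> T) (inv : T -> T) (n : nat)
  (x : 'I_n -> T) (t : term T n) : T :=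
  match t with
  | tvar i => x i
  | tconst c => c
  | tmul t1 t2 => mul (teval mul inv x t1) (teval mul inv x t2)
  | tinv t1 => inv (teval mul inv x t1)
  end.

Definition equation (T : Type) (n : nat) := (term T n * term T n)%type.

Definition algebraic (T : Type) (mul : T -> T -> T) (inv : T -> T) (n : nat)
  (A : ('I_n -> T) -> Prop) : Prop :=
  exists Sys : equation T n -> Prop,
    forall x, A x <-> (forall e, Sys e -> teval mul inv x e.1 = teval mul inv x e.2).

Definition equational_domain (T : Type) (mul : T -> T -> T) (inv : T -> T) : Prop :=
  forall (n k : nat) (A : 'I_k -> ('I_n -> T) -> Prop),
    (forall j, algebraic mul inv (A j)) ->
    algebraic mul inv (fun x => exists j, A j x).

From mathcomp Require Import all_boot.
Set Implicit Arguments. Unset Strict Implicit.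

(* Suppose c <> c' have the same group entry, while the rows of P indexed by
   their I-components agree and so do the columns indexed by their
   Lambda-components.  Then (x0 = c) \/ (x1 = c) is not algebraic: every term
   equation holding at (c,c), (c,c') and (c',c) also holds at (c',c').  The
   middle component of a term value cannot tell c from c', since P only enters
   through the equal rows and columns; the first (last) component of a term
   value is either a constant or the first (last) component of a single
   variable, and such functions cannot separate (c',c') from the other three
   points.  A singular P provides such c, c' with group entry 1. *)

Definition coord_or_const (T K : Type) (n : nat) (f : T -> K) (F : ('I_n -> T) -> K) :=
  (exists v, forall x, F x = f (x v)) \/ (exists k, forall x, F x = k).

Definition pt2 (T : Type) (a b : T) : 'I_2 -> T := fun v => if val v == 0 then a else b.

Lemma coord_or_const_pt2 (T K : Type) (f : T -> K) (F1 F2 : ('I_2 -> T) -> K) (c c' : T) :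
  coord_or_const f F1 -> coord_or_const f F2 ->
  F1 (pt2 c c) = F2 (pt2 c c) -> F1 (pt2 c c') = F2 (pt2 c c') ->
  F1 (pt2 c' c) = F2 (pt2 c' c) -> F1 (pt2 c' c') = F2 (pt2 c' c').
Proof.
by case=> [[[[|[|?]] ?] F1v]|[k1 F1k]] [[[[|[|?]] ?] F2v]|[k2 F2k]];
  rewrite ?F1v ?F2v ?F1k ?F2k.
Qed.

Section CompletelySimple.

Variables (G : group) (L I : Type) (P : I -> L -> G).

Local Notation S := (cs_elt G L I).
Local Notation eval := (teval (cs_mul P) (cs_inv P)).

Lemma cs_elt_ext (a b : S) :
  a.1.1 = b.1.1 -> a.1.2 = b.1.2 -> a.2 = b.2 -> a = b.
Proof. by case: a => [[? ?] ?]; case: b => [[? ?] ?] /= -> -> ->. Qed.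

Lemma cs_mul_fst (a b : S) : (cs_mul P a b).1.1 = a.1.1.
Proof. by case: a => [[? ?] ?]; case: b => [[? ?] ?]. Qed.

Lemma cs_mul_mid (a b : S) :
  (cs_mul P a b).1.2 = gmul (gmul a.1.2 (P a.2 b.1.1)) b.1.2.
Proof. by case: a => [[? ?] ?]; case: b => [[? ?] ?]. Qed.

Lemma cs_mul_snd (a b : S) : (cs_mul P a b).2 = b.2.
Proof. by case: a => [[? ?] ?]; case: b => [[? ?] ?]. Qed.

Lemma cs_inv_fst (a : S) : (cs_inv P a).1.1 = a.1.1.
Proof. by case: a => [[? ?] ?]. Qed.

Lemma cs_inv_mid (a : S) :
  (cs_inv P a).1.2 = gmul (gmul (ginv (P a.2 a.1.1)) (ginv a.1.2)) (ginv (P a.2 a.1.1)).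
Proof. by case: a => [[? ?] ?]. Qed.

Lemma cs_inv_snd (a : S) : (cs_inv P a).2 = a.2.
Proof. by case: a => [[? ?] ?]. Qed.

Lemma fst_teval_coord_or_const n (t : term S n) :
  coord_or_const (fun a : S => a.1.1) (fun x => (eval x t).1.1).
Proof.
elim: t => [v|c|t1 IH1 t2 _|t1 IH1] /=.
- by left; exists v.
- by right; exists c.1.1.
- by case: IH1 => [[v E]|[k E]]; [left; exists v|right; exists k] => x; rewrite cs_mul_fst E.
- by case: IH1 => [[v E]|[k E]]; [left; exists v|right; exists k] => x; rewrite cs_inv_fst E.
Qed.

Lemma snd_teval_coord_or_const n (t : term S n) :
  coord_or_const (fun a : S => a.2) (fun x => (eval x t).2).
Proof.
elim: t => [v|c|t1 _ t2 IH2|t1 IH1] /=.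
- by left; exists v.
- by right; exists c.2.
- by case: IH2 => [[v E]|[k E]]; [left; exists v|right; exists k] => x; rewrite cs_mul_snd E.
- by case: IH1 => [[v E]|[k E]]; [left; exists v|right; exists k] => x; rewrite cs_inv_snd E.
Qed.

Definition cs_equiv (a b : S) : Prop :=
  [/\ a.1.2 = b.1.2, forall l, P a.2 l = P b.2 l & forall i, P i a.1.1 = P i b.1.1].

Lemma teval_equiv n (x y : 'I_n -> S) (t : term S n) :
  (forall v, cs_equiv (x v) (y v)) -> cs_equiv (eval x t) (eval y t).
Proof.
move=> xy; elim: t => [v|c|t1 [m1 r1 c1] t2 [m2 r2 c2]|t1 [m1 r1 c1]] /=.
- exact: xy.
- by [].
- by split; rewrite ?cs_mul_fst ?cs_mul_mid ?cs_mul_snd // m1 m2 r1 c2.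
- by split; rewrite ?cs_inv_fst ?cs_inv_mid ?cs_inv_snd // m1 r1 c1.
Qed.

Lemma teval_eq_pt2_diag (c c' : S) (t s : term S 2) : cs_equiv c c' ->
  eval (pt2 c c) t = eval (pt2 c c) s -> eval (pt2 c c') t = eval (pt2 c c') s ->
  eval (pt2 c' c) t = eval (pt2 c' c) s -> eval (pt2 c' c') t = eval (pt2 c' c') s.
Proof.
move=> cc' E_cc E_cc' E_c'c.
have equiv_diag u : cs_equiv (eval (pt2 c c) u) (eval (pt2 c' c') u).
  by apply: teval_equiv => v; rewrite /pt2; case: (_ == 0).
apply: cs_elt_ext.
- apply: (coord_or_const_pt2 (c := c) (c' := c')
    (fst_teval_coord_or_const t) (fst_teval_coord_or_const s));
  by rewrite ?E_cc ?E_cc' ?E_c'c.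
- by have [<- _ _] := equiv_diag t; have [<- _ _] := equiv_diag s; rewrite E_cc.
- apply: (coord_or_const_pt2 (c := c) (c' := c')
    (snd_teval_coord_or_const t) (snd_teval_coord_or_const s));
  by rewrite ?E_cc ?E_cc' ?E_c'c.
Qed.

Lemma not_equational_domain_of_equiv (c c' : S) :
  cs_equiv c c' -> c <> c' -> ~ equational_domain (cs_mul P) (cs_inv P).
Proof.
move=> cc' neq_cc' ED.
have [|Sys Sys_sol] := ED 2 2 (fun j x => x j = c).
  move=> j; exists (fun e => e = (tvar _ j, tconst _ c)) => x.
  by split=> [xj e -> //|sol]; exact: sol _ erefl.
have sol_pt2 a b : a = c \/ b = c -> forall e, Sys e ->
    eval (pt2 a b) e.1 = eval (pt2 a b) e.2.
  by move=> ab; apply/Sys_sol; case: ab => ->; [exists ord0|exists ord_max].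
have : ~ exists j : 'I_2, pt2 c' c' j = c.
  by case=> j; rewrite /pt2; case: (_ == 0); apply: nesym.
apply; apply/Sys_sol => -[t s] ts /=.
apply: teval_eq_pt2_diag cc' _ _ _.
- exact: (sol_pt2 c c (or_introl erefl) _ ts).
- exact: (sol_pt2 c c' (or_introl erefl) _ ts).
- exact: (sol_pt2 c' c (or_intror erefl) _ ts).
Qed.

End CompletelySimple.

Theorem mainTheorem2 (G : group) (L I : Type) (l1 : L) (i1 : I)
  (P : I -> L -> G) (Pnorm : normalised l1 i1 P) (Psing : singular P) :
  ~ equational_domain (@cs_mul G L I P) (@cs_inv G L I P).
Proof.
case: Psing => [[i [j [neq_ij rows_ij]]]|[l [m [neq_lm cols_lm]]]].
- by apply: (@not_equational_domain_of_equiv G L I P (l1, gone G, i) (l1, gone G, j));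
    [split|case].
- by apply: (@not_equational_domain_of_equiv G L I P (l, gone G, i1) (m, gone G, i1));
    [split|case].
Qed.
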